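(* Let $G$ be a co-chordal simple graph with at least one edge, whose vertices are among the variables of $S=\mathbb{K}[x_1,\dots,x_n]$, $\mathbb{K}$ a field. Then $\operatorname{sreg}(S/I(G))\le 1$.
   Context: A graph is chordal if every induced cycle has length 3, and co-chordal if its complement graph is chordal. $I(G)=(xy : \{x,y\}\in E(G))$ is the edge ideal. Stanley regularity: for a squarefree monomial ideal $I\subset S$, a squarefree Stanley decomposition of $S/I$ is a decomposition $S/I=\bigoplus_{i=1}^r u_i\mathbb{K}[Z_i]$ as $\mathbb{K}$-vector spaces, where $Z_i\subseteq\{x_1,\dots,x_n\}$, $u_i$ are (images of) squarefree monomials with $\operatorname{supp}(u_i)\subseteq Z_i$, and each $u_i\mathbb{K}[Z_i]$ is free over $\mathbb{K}[Z_i]$. Its Stanley regularity is $\max_i\deg(u_i)$, and $\operatorname{sreg}(S/I)$ is the minimum over all such decompositions. *)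

From HB Require Import structures.
From mathcomp Require Import all_boot all_order all_algebra.
From mathcomp Require Import mpoly.
Set Implicit Arguments. Unset Strict Implicit. Unset Printing Implicit Defensive.
Import GRing.Theory.
Local Open Scope ring_scope.

(* ---------- Graphs: a simple graph on the variables x_0..x_{n-1} is a
   symmetric irreflexive relation on 'I_n. ---------- *)
Definition simple_graph (T : finType) (e : rel T) :=
  ssrbool.symmetric e /\ ssrbool.irreflexive e.

Definition compl_graph (T : finType) (e : rel T) : rel T :=
  fun x y => (x != y) && ~~ e x y.

Definition induced_cycle (T : finType) (e : rel T) (s : seq T) :=
  [/\ uniq s, 3 <= size s &
   forall x0 i j, i < size s -> j < size s -> i != j ->
     e (nth x0 s i) (nth x0 s j) =
       ((j == i.+1 %% size s) || (i == j.+1 %% size s))]%N.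

Definition chordal (T : finType) (e : rel T) :=
  forall s : seq T, induced_cycle e s -> size s = 3%N.

Definition cochordal (T : finType) (e : rel T) := chordal (compl_graph e).

Definition in_edge_ideal (K : fieldType) (n : nat) (e : rel 'I_n)
    (p : {mpoly K[n]}) : Prop :=
  exists s : seq ('I_n * 'I_n * {mpoly K[n]}),
    all (fun t => e t.1.1 t.1.2) s /\
    p = \sum_(t <- s) t.2 * ('X_t.1.1 * 'X_t.1.2).

Definition mon_supp (n : nat) (m : 'X_{1..n}) : {set 'I_n} :=
  [set i | (m i != 0)%N].

Definition squarefree_mon (n : nat) (m : 'X_{1..n}) :=
  [forall i, (m i <= 1)%N].

Definition in_subring (K : fieldType) (n : nat) (Z : {set 'I_n})
    (p : {mpoly K[n]}) :=
  all (fun m => mon_supp m \subset Z) (msupp p).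

(* ---------- Squarefree Stanley decompositions of S/I(G) ----------
   A decomposition is given by r pairs D i = (u_i, Z_i).  It is a squarefree
   Stanley decomposition of S/I when
   - each u_i is a squarefree monomial with supp(u_i) ⊆ Z_i;
   - each u_i K[Z_i] (image in S/I) is free over K[Z_i], i.e.
     f ∈ K[Z_i] and u_i f ∈ I imply f = 0;
   - S/I = sum of the images of the u_i K[Z_i] (spanning);
   - the sum is direct: if sum_i u_i f_i ∈ I with f_i ∈ K[Z_i] then every
     u_i f_i ∈ I (i.e. is 0 in S/I). *)
Definition sqfree_stanley_decomp (K : fieldType) (n : nat) (e : rel 'I_n)
    (r : nat) (D : 'I_r -> 'X_{1..n} * {set 'I_n}) : Prop :=
  [/\ forall i, squarefree_mon (D i).1 /\ mon_supp (D i).1 \subset (D i).2,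
      forall i (f : {mpoly K[n]}), in_subring (D i).2 f ->
        in_edge_ideal e ('X_[(D i).1] * f) -> f = 0,
      forall p : {mpoly K[n]}, exists fs : 'I_r -> {mpoly K[n]},
        (forall i, in_subring (D i).2 (fs i)) /\
        in_edge_ideal e (p - \sum_(i < r) 'X_[(D i).1] * fs i) &
      forall fs : 'I_r -> {mpoly K[n]},
        (forall i, in_subring (D i).2 (fs i)) ->
        in_edge_ideal e (\sum_(i < r) 'X_[(D i).1] * fs i) ->
        forall i, in_edge_ideal e ('X_[(D i).1] * fs i)].

Definition stanley_reg (n r : nat) (D : 'I_r -> 'X_{1..n} * {set 'I_n}) : nat :=
  (\max_(i < r) mdeg (D i).1)%N.

(* sreg(S/I(G)) <= k : the minimum over all squarefree Stanley decompositions
   of the Stanley regularity is at most k, i.e. some decomposition achieves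
   Stanley regularity <= k. *)
Definition sreg_le (K : fieldType) (n : nat) (e : rel 'I_n) (k : nat) : Prop :=
  exists (r : nat) (D : 'I_r -> 'X_{1..n} * {set 'I_n}),
    sqfree_stanley_decomp K e D /\ (stanley_reg D <= k)%N.

From HB Require Import structures.
From mathcomp Require Import all_boot all_order all_algebra.
From mathcomp Require Import mpoly.
From mathcomp Require Import zify.
Set Implicit Arguments. Unset Strict Implicit. Unset Printing Implicit Defensive.

(* The complement H of G is chordal, so it has a perfect elimination ordering:
   the earlier H-neighbours of every vertex form an H-clique.  Following Dirac,
   a simplicial vertex outside a given clique is found by induction: if a vertex
   x is not universal, pass to a component C of its non-neighbourhood together
   with the neighbours S of C; S is a clique, since a shortest path through C
   between two non-adjacent vertices of S would close up with x into an induced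
   cycle of length at least 4.
   For a vertex v let Z_v consist of v and its earlier H-neighbours; Z_v is
   independent in G.  A monomial lies outside I(G) iff its support is
   independent, and then it lies in x_v K[Z_v] exactly when v is the latest
   vertex of its support (or in 1 K[{}] when it is 1).  So these cells partition
   the standard monomials and form a Stanley decomposition of S/I(G) whose
   generators have degree at most 1. *)

Lemma modn_succ i m : i < m -> i.+1 %% m = if i.+1 == m then 0 else i.+1.
Proof. by move=> lt_im; case: eqP => [->|ne]; [rewrite modnn | rewrite modn_small; lia]. Qed.

Lemma index_rcons (T : eqType) (s : seq T) x z :
  index z (rcons s x) = if z \in s then index z s else size s + (x != z).
Proof. by rewrite -cats1 index_cat /=; case: eqP. Qed.

Section ChordalGraph.
Variables (T : finType) (H : rel T).
Hypotheses (Hsym : ssrbool.symmetric H) (Hirr : irreflexive H) (Hch : chordal H).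

Definition induced_path (s : seq T) :=
  uniq s /\ forall x0 i j, i < size s -> j < size s ->
    H (nth x0 s i) (nth x0 s j) = (j == i.+1) || (i == j.+1).

Lemma induced_pathP x0 s : uniq s -> sorted H s ->
    (forall i j, i.+1 < j -> j < size s -> ~~ H (nth x0 s i) (nth x0 s j)) ->
  induced_path s.
Proof.
move=> s_uniq s_sorted no_chord; split=> // y0 i j lt_is lt_js.
rewrite !(set_nth_default x0) //.
wlog le_ij : i j lt_is lt_js / i <= j.
  move=> wlog_le; case: (leqP i j) => [|/ltnW le_ji]; first exact: wlog_le.
  by rewrite Hsym orbC wlog_le.
rewrite [i == j.+1]eqn_leq [j.+1 <= i]leqNgt ltnS le_ij andbF orbF.
case: (ltngtP i.+1 j) => [lt_ij | lt_ji | eq_ij].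
- by rewrite (negbTE (no_chord i j lt_ij lt_js)).
- have -> : j = i by apply/eqP; rewrite eqn_leq le_ij -ltnS lt_ji.
  by rewrite Hirr.
- by move/(sortedP x0): s_sorted => /(_ i); rewrite eq_ij; apply.
Qed.

Lemma path_chord_shortcut x p i j : path H x p -> i < j < size p ->
    H (nth x (x :: p) i) (nth x p j) ->
  path H x (take i p ++ drop j p) /\ last x (take i p ++ drop j p) = last x p.
Proof.
move=> x_p /andP [lt_ij lt_jp] chord.
have split_j : p = rcons (take j p) (nth x p j) ++ drop j.+1 p.
  by rewrite -take_nth // cat_take_drop.
have take_last : last x (take i p) = nth x (x :: p) i.
  case: i lt_ij {chord} => [|i] lt_ij; first by rewrite take0.
  by rewrite (take_nth x) ?last_rcons //; lia.
have path_j : path H (nth x p j) (drop j.+1 p).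
  by move: x_p; rewrite [in path _ _ p]split_j cat_path last_rcons => /andP [].
rewrite cat_path take_path // take_last (drop_nth x lt_jp) /= chord path_j.
by split=> //; rewrite last_cat /= [in RHS]split_j last_cat last_rcons.
Qed.

Lemma induced_subpath x p : path H x p ->
  exists2 q, induced_path (x :: q) & last x q = last x p /\ {subset q <= p}.
Proof.
have [k] := ubnP (size p); elim: k x p => // k IH x p /ltnSE size_p x_p.
case: (shortenP x_p) => p' x_p' uniq_p' sub_p'.
have size_p' : size p' <= k.
  by apply: leq_trans size_p; apply: uniq_leq_size => //; case/andP: uniq_p'.
case: (boolP [exists i : 'I_(size p'), exists j : 'I_(size p'),
    (i < j) && H (nth x (x :: p') i) (nth x p' j)]).
  case/existsP=> [[i lt_ip]] /existsP [[j lt_jp]] /= /andP [lt_ij chord].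
  have [cut_path cut_last] := path_chord_shortcut x_p' (introT andP (conj lt_ij lt_jp)) chord.
  have [|q q_ind [q_last sub_q]] := IH x _ _ cut_path.
    apply: leq_trans size_p'; rewrite size_cat size_take size_drop lt_ip.
    by rewrite -[X in _ < X](subnKC (ltnW lt_jp)) ltn_add2r.
  exists q => //; split; first by rewrite q_last cut_last.
  move=> z /sub_q; rewrite mem_cat => /orP [/mem_take|/mem_drop]; exact: sub_p'.
move=> /existsPn no_chord; exists p'; last by [].
apply: (@induced_pathP x) => //= i [|j] //= lt_ij lt_jp.
rewrite !ltnS in lt_ij lt_jp; have lt_ip := ltn_trans lt_ij lt_jp.
by have /existsPn /(_ (Ordinal lt_jp)) := no_chord (Ordinal lt_ip); rewrite /= lt_ij.
Qed.

Lemma cone_induced_cycle x s : induced_path s -> 2 < size s -> x \notin s ->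
    (forall x0 i, i < size s -> H x (nth x0 s i) = (i == 0) || (i == (size s).-1)) ->
  induced_cycle H (x :: s).
Proof.
move=> [s_uniq s_adj] size_s x_s x_adj; split=> /=; [by rewrite x_s | exact: ltnW |].
move=> x0 [|i] [|j] //= lt_i lt_j ne_ij; rewrite !modn_succ //.
- by rewrite x_adj //; do 2?case: ifP => ?; lia.
- by rewrite Hsym x_adj //; do 2?case: ifP => ?; lia.
- by rewrite s_adj //; do 2?case: ifP => ?; lia.
Qed.

Lemma common_neighbours_adjacent x a b (C : {pred T}) p :
    x \notin C -> {in C, forall z, ~~ H x z} -> H x a -> H x b -> a != b ->
    path H a p -> last a p = b -> {subset p <= [predU1 b & C]} ->
  H a b.
Proof.
move=> x_C x_nC x_a x_b a_b a_p p_b p_sub; apply/negPn/negP => nH_ab.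
have [q q_ind [q_last q_sub]] := induced_subpath a_p.
case/lastP: q q_ind q_last q_sub => [_ /= ab|q c q_ind]; first by rewrite ab p_b eqxx in a_b.
rewrite last_rcons p_b => c_b q_sub; subst c.
have uniq_qb : uniq (rcons q b) by case: q_ind; rewrite cons_uniq => /andP [].
have q_C : {subset q <= C}.
  move=> z z_q; have := q_sub z; rewrite mem_rcons in_cons z_q orbT => /(_ isT).
  by case/p_sub/predU1P => // z_b; move: uniq_qb; rewrite rcons_uniq -z_b z_q.
have size_q : 0 < size q.
  rewrite lt0n size_eq0; apply: contra nH_ab => /eqP q0.
  by case: q_ind => _ /(_ a 0 1); rewrite q0 /= => /(_ isT isT) ->.
suff cyc : induced_cycle H (x :: a :: rcons q b).
  by have := Hch cyc; rewrite /= size_rcons; lia.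
apply: cone_induced_cycle => //; first by rewrite /= size_rcons; lia.
  rewrite !inE mem_rcons in_cons !negb_or; apply/and3P; split.
  - by apply: contraTneq x_a => ->; rewrite Hirr.
  - by apply: contraTneq x_b => ->; rewrite Hirr.
  - exact: contra (q_C x) x_C.
move=> x0 [|i] //=; rewrite size_rcons ltnS nth_rcons => lt_i.
case: ltnP => [lt_iq | le_qi]; last by rewrite ifT ?x_b; lia.
by rewrite (negbTE (x_nC _ (q_C _ (mem_nth x0 lt_iq)))); lia.
Qed.

Definition clique (K : {set T}) := {in K &, forall a b : T, a != b -> H a b}.

Definition simplicial (W : {set T}) v :=
  {in W &, forall a b : T, H v a -> H v b -> a != b -> H a b}.

Definition component (A : {set T}) y : {set T} :=
  [set z | connect [rel a b | [&& a \in A, b \in A & H a b]] y z].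

Section Component.
Variables (A : {set T}) (y : T).
Hypothesis y_A : y \in A.

Lemma component_subset : {subset component A y <= A}.
Proof.
move=> z; rewrite inE => /connectP [q]; case/lastP: q => [_ -> // | q c].
by rewrite rcons_path last_rcons => /andP [_ /and3P [_ ? _]] ->.
Qed.

Lemma component_closed z w :
  z \in component A y -> w \in A -> H z w -> w \in component A y.
Proof.
move=> z_C w_A zw; have z_A := component_subset z_C.
by move: z_C; rewrite !inE => y_z; apply: connect_trans y_z (connect1 _); rewrite /= z_A w_A.
Qed.

Lemma component_path za zb : za \in component A y -> zb \in component A y ->
  exists2 q, path H za q & last za q = zb /\ {subset za :: q <= component A y}.
Proof.
rewrite !inE => y_za y_zb.
have sym : connect_sym [rel a b | [&& a \in A, b \in A & H a b]].
  by apply: sym_connect_sym => u v /=; rewrite Hsym andbCA.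
have /connectP [q za_q zb_q] := connect_trans (etrans (sym za y) y_za) y_zb.
exists q; first by apply: sub_path za_q => u v /and3P [].
split=> [|z /(path_connect za_q) za_z]; first by rewrite zb_q.
by rewrite inE (connect_trans y_za za_z).
Qed.

Lemma component_neighbours_adjacent x a b : x \notin A -> {in A, forall z, ~~ H x z} ->
    H x a -> H x b -> a != b ->
    (exists2 za, za \in component A y & H a za) ->
    (exists2 zb, zb \in component A y & H b zb) ->
  H a b.
Proof.
move=> x_A x_nA x_a x_b a_b [za za_C a_za] [zb zb_C b_zb].
have [q za_q [zb_q q_C]] := component_path za_C zb_C.
apply: (common_neighbours_adjacent (C := mem (component A y)) _ _ x_a x_b a_b
  (p := za :: rcons q b)).
- by apply: contra x_A; apply: component_subset.
- by move=> z /component_subset; apply: x_nA.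
- by rewrite /= a_za rcons_path za_q zb_q Hsym b_zb.
- by rewrite /= last_rcons.
move=> z; rewrite -rcons_cons mem_rcons in_cons => /orP [z_b | z_q]; apply/predU1P.
  by left; apply/eqP.
by right; apply: q_C.
Qed.

End Component.

Lemma component_split (W : {set T}) x y0 : x \in W -> y0 \in W -> y0 != x -> ~~ H x y0 ->
  exists W' S : {set T}, [/\ W' \proper W, S \subset W', clique S, y0 \in W' :\: S &
    {in W' :\: S, forall s, [/\ s != x, ~~ H x s & {in W, forall a, H s a -> a \in W'}]}].
Proof.
move=> x_W y0_W y0_x nH_xy0.
pose A := [set z in W | (z != x) && ~~ H x z].
have y0_A : y0 \in A by rewrite inE y0_W y0_x.
pose C := component A y0.
pose S := [set w in W :\: C | [exists z in C, H w z]].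
have x_nA : {in A, forall z, ~~ H x z} by move=> z; rewrite inE => /and3P [].
have x_A : x \notin A by rewrite inE eqxx andbF.
have S_C : {in S, forall w, [/\ w \in W, w \notin C & exists2 z, z \in C & H w z]}.
  move=> w; rewrite in_set in_setD => /andP [/andP [w_C w_W] /existsP [z /andP [z_C wz]]].
  by split=> //; exists z.
have S_x : {in S, forall w, H x w}.
  move=> w w_S; have [w_W w_C [z z_C wz]] := S_C w w_S.
  have w_A : w \notin A.
    by apply: contra w_C => w_A; apply: (component_closed y0_A z_C w_A); rewrite Hsym.
  apply: contraR w_A => nH_xw; rewrite inE w_W nH_xw andbT /=.
  by apply: contraNneq (x_nA z (component_subset y0_A z_C)) => w_x; rewrite -w_x.
have W'_C : {in (C :|: S) :\: S, forall s, s \in C}.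
  by move=> s; rewrite in_setD in_setU => /andP [s_S /orP [// | s_S']]; rewrite s_S' in s_S.
exists (C :|: S), S; split.
- apply/properP; split; last first.
    exists x => //; rewrite in_setU negb_or; apply/andP; split.
      by apply: contra x_A; apply: component_subset.
    by apply/negP => /S_x; rewrite Hirr.
  apply/subsetP => z; rewrite in_setU => /orP [/(component_subset y0_A) | /S_C []//].
  by rewrite inE => /andP [].
- exact: subsetUr.
- move=> a b a_S b_S a_b.
  apply: (component_neighbours_adjacent y0_A x_A x_nA (S_x a a_S) (S_x b b_S) a_b).
    by case: (S_C a a_S).
  by case: (S_C b b_S).
- have y0_C : y0 \in C by rewrite inE connect0.
  by rewrite in_setD in_setU y0_C andbT; apply/negP; case/S_C => _; rewrite y0_C.
move=> s /W'_C s_C; have := component_subset y0_A s_C; rewrite inE => /and3P [_ s_x nH_xs].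
split=> // a a_W s_a; rewrite in_setU.
have [a_A | a_A] := boolP (a \in A); first by rewrite (component_closed y0_A s_C a_A s_a).
apply/orP; right; rewrite in_set in_setD a_W andbT; apply/andP; split.
  by apply: contra a_A; apply: component_subset.
by apply/existsP; exists s; rewrite s_C Hsym.
Qed.

Lemma simplicial_delete_universal (W : {set T}) x s :
    {in W, forall z, z != x -> H x z} -> s != x -> simplicial (W :\ x) s ->
  simplicial W s.
Proof.
move=> x_univ s_x s_simp a b a_W b_W s_a s_b a_b.
have [a_x | a_x] := eqVneq a x; first by rewrite a_x; apply: x_univ; rewrite // -a_x eq_sym.
have [b_x | b_x] := eqVneq b x; first by rewrite b_x Hsym; apply: x_univ; rewrite // -b_x.
by apply: s_simp; rewrite // in_setD1 ?a_x ?b_x.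
Qed.

Lemma simplicial_outside_clique (W K : {set T}) :
  K \subset W -> clique K -> ~~ (W \subset K) -> exists2 s, s \in W :\: K & simplicial W s.
Proof.
have [k] := ubnP #|W|; elim: k W K => // k IH W K /ltnSE size_W K_W K_clique.
case/subsetPn => y y_W y_K.
have [x x_W x_K] : exists2 x, x \in W & {in K, forall z, z != x -> H x z}.
  have [-> | [k0 k0_K]] := set_0Vmem K; first by exists y => // z; rewrite inE.
  exists k0 => [|z z_K z_k0]; first exact: (subsetP K_W).
  by apply: K_clique; rewrite // eq_sym.
have [/forall_inP x_univ | /forall_inPn [y0 y0_W]] := boolP [forall z in W, (z != x) ==> H x z].
  have univ : {in W, forall z, z != x -> H x z} by move=> z /x_univ /implyP.
  have [WK_x | /subsetPn [y' y'_WK y'_x]] := boolP (W :\: K \subset [set x]).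
    (* the only vertex outside K is x, and all its neighbours lie in the clique K *)
    have W_K : {in W, forall z, z != x -> z \in K}.
      move=> z z_W; apply: contraR => z_K; rewrite -in_set1.
      by apply: (subsetP WK_x); rewrite in_setD z_K.
    have y_x : y = x by apply/set1P; apply: (subsetP WK_x); rewrite in_setD y_K.
    exists x; first by rewrite -y_x in_setD y_K.
    move=> a b a_W b_W x_a x_b a_b; apply: K_clique => //; apply: W_K => //.
      by apply: contraTneq x_a => ->; rewrite Hirr.
    by apply: contraTneq x_b => ->; rewrite Hirr.
  have [|||s] := IH (W :\ x) (K :\ x) _ (setSD _ K_W).
  - by move: size_W; rewrite (cardsD1 x W) x_W.
  - by move=> a b /setD1P [_ a_K] /setD1P [_ b_K]; apply: K_clique.
  - move: y'_WK y'_x; rewrite in_setD in_set1 => /andP [y'_K y'_W] y'_x.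
    by apply/subsetPn; exists y'; rewrite !in_setD1 y'_x.
  rewrite in_setD !in_setD1 => /andP [s_K /andP [s_x s_W]] s_simp.
  exists s; last exact: simplicial_delete_universal s_simp.
  by rewrite in_setD s_W andbT; rewrite s_x in s_K.
rewrite negb_imply => /andP [y0_x nH_xy0].
have [W' [S [W'_W S_W' S_clique y0_W'S W'S_nbr]]] := component_split x_W y0_W y0_x nH_xy0.
have [||s s_W'S s_simp] := IH W' S _ S_W' S_clique.
- exact: leq_trans (proper_card W'_W) size_W.
- by apply/subsetPn; exists y0; move: y0_W'S; rewrite in_setD => /andP [].
have [s_x nH_xs s_nbr] := W'S_nbr s s_W'S.
have s_W' : s \in W' by move: s_W'S; rewrite in_setD => /andP [].
exists s; last first.
  by move=> a b a_W b_W s_a s_b; apply: s_simp (s_nbr a a_W s_a) (s_nbr b b_W s_b) s_a s_b.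
rewrite in_setD (subsetP (proper_sub W'_W) s s_W') andbT.
by apply: contra nH_xs => s_K; apply: x_K.
Qed.

Definition elimination_ordering (s : seq T) :=
  forall v a b, v \in s -> H v a -> H v b ->
    index a s < index v s -> index b s < index v s -> a != b -> H a b.

Lemma chordal_elimination_ordering (W : {set T}) :
  exists2 s : seq T, s =i W & elimination_ordering s.
Proof.
have [k] := ubnP #|W|; elim: k W => // k IH W /ltnSE size_W.
have [-> | [y y_W]] := set_0Vmem W; first by exists [::] => // z; rewrite inE.
have [||v0] := @simplicial_outside_clique W set0 (sub0set W).
- by move=> a; rewrite inE.
- by apply/subsetPn; exists y; rewrite ?inE.
rewrite setD0 => v0_W v0_simp.
have [|s s_W s_elim] := IH (W :\ v0); first by move: size_W; rewrite (cardsD1 v0) v0_W.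
exists (rcons s v0) => [z | v a b].
  by rewrite mem_rcons in_cons s_W in_setD1; case: eqVneq => // ->.
rewrite mem_rcons in_cons !index_rcons.
have [v_s _ v_a v_b | v_s /orP [/eqP v_v0 | //] v_a v_b] := boolP (v \in s).
  have lt_v := v_s; rewrite -index_mem in lt_v.
  case: ifPn => a_s; last lia.
  case: ifPn => b_s; last lia.
  exact: s_elim.
rewrite v_v0 eqxx addn0.
case: ifPn => a_s; last lia.
case: ifPn => b_s; last lia.
move=> _ _; apply: (v0_simp a b); rewrite -?v_v0 //.
  by move: a_s; rewrite s_W => /setD1P [].
by move: b_s; rewrite s_W => /setD1P [].
Qed.

End ChordalGraph.

Lemma compl_graph_sym (T : finType) (e : rel T) :
  ssrbool.symmetric e -> ssrbool.symmetric (compl_graph e).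
Proof. by move=> esym a b; rewrite /compl_graph eq_sym esym. Qed.

Lemma compl_graph_irr (T : finType) (e : rel T) : irreflexive (compl_graph e).
Proof. by move=> a; rewrite /compl_graph eqxx. Qed.

Import GRing.Theory.

Section Independence.
Variables (n : nat) (e : rel 'I_n).

Definition independent (Z : {set 'I_n}) := [forall a in Z, forall b in Z, ~~ e a b].

Lemma independentP (Z : {set 'I_n}) :
  reflect {in Z &, forall a b, ~~ e a b} (independent Z).
Proof.
apply: (iffP forall_inP) => [Z_ind a b a_Z | Z_ind a a_Z].
  exact: (forall_inP (Z_ind a a_Z)).
by apply/forall_inP => b; apply: Z_ind.
Qed.

Lemma subset_independent (Z Z' : {set 'I_n}) :
  Z \subset Z' -> independent Z' -> independent Z.
Proof.
move=> /subsetP ZZ' /independentP Z'_ind; apply/independentP => a b a_Z b_Z.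
exact: Z'_ind (ZZ' a a_Z) (ZZ' b b_Z).
Qed.

End Independence.

Section Monomials.
Variable n : nat.

Lemma mem_mon_supp (M : 'X_{1..n}) i : (i \in mon_supp M) = (M i != 0).
Proof. by rewrite inE. Qed.

Lemma mon_suppD (M N : 'X_{1..n}) : mon_supp (M + N) = mon_supp M :|: mon_supp N.
Proof. by apply/setP => i; rewrite !inE mnmDE addn_eq0 negb_and. Qed.

Lemma mnm1_le i (M : 'X_{1..n}) : (U_(i) <= M)%MM = (i \in mon_supp M).
Proof.
rewrite mem_mon_supp -lt0n; apply/mnm_lepP/idP => [/(_ i)|M_i j].
  by rewrite mnm1E eqxx.
by rewrite mnm1E; case: eqP => [<-|].
Qed.

Lemma mnm1D_le a b (M : 'X_{1..n}) :
  a != b -> a \in mon_supp M -> b \in mon_supp M -> (U_(a) + U_(b) <= M)%MM.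
Proof.
rewrite !mem_mon_supp -!lt0n => a_b a_M b_M; apply/mnm_lepP => i; rewrite mnmDE !mnm1E.
case: eqVneq => [<-|_]; case: eqVneq => [b_i|_] //; first by rewrite b_i eqxx in a_b.
by rewrite -b_i.
Qed.

Definition in_cell (c : 'X_{1..n} * {set 'I_n}) (M : 'X_{1..n}) :=
  (c.1 <= M)%MM && (mon_supp M \subset c.2).

Lemma in_cell_addl (c : 'X_{1..n} * {set 'I_n}) N :
  mon_supp c.1 \subset c.2 -> in_cell c (N + c.1) = (mon_supp N \subset c.2).
Proof. by move=> c_sub; rewrite /in_cell lem_addl mon_suppD subUset c_sub andbT. Qed.

End Monomials.

Section Coefficients.
Local Open Scope ring_scope.
Variables (K : fieldType) (n : nat).

Lemma mcoeffXM (u M : 'X_{1..n}) (f : {mpoly K[n]}) :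
  ('X_[u] * f)@_M = if (u <= M)%MM then f@_(M - u) else 0.
Proof.
rewrite mulrC; case: ifP => [u_M | u_M]; first by rewrite -{1}(submK u_M) addmC mcoeffMX.
apply/eqP; rewrite mcoeff_eq0 (perm_mem (msuppMX f u)); apply/mapP => -[m _ M_m].
by rewrite M_m lem_addr in u_M.
Qed.

Lemma mcoeffXM_add (u N : 'X_{1..n}) (f : {mpoly K[n]}) : ('X_[u] * f)@_(N + u) = f@_N.
Proof. by rewrite mulrC addmC mcoeffMX. Qed.

Lemma mcoeff_sum_msupp (P : pred 'X_{1..n}) (p : {mpoly K[n]}) M :
  (\sum_(m <- msupp p | P m) p@_m *: 'X_[m])@_M = if P M then p@_M else 0.
Proof.
rewrite raddf_sum big_mkcond /=; under eq_bigr do rewrite mcoeffZ mcoeffX.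
have [M_p | M_p] := boolP (M \in msupp p).
  rewrite (bigD1_seq M) ?msupp_uniq //= eqxx mulr1 big1 ?addr0 // => m m_M.
  by rewrite (negbTE m_M) mulr0 if_same.
rewrite big1_seq => [|m /andP [_ m_p]].
  by move: M_p; rewrite mcoeff_msupp negbK => /eqP ->; rewrite if_same.
by rewrite (_ : (m == M) = false) ?mulr0 ?if_same //; apply: contraNF M_p => /eqP <-.
Qed.

Lemma in_subringP (Z : {set 'I_n}) (f : {mpoly K[n]}) :
  reflect (forall N, f@_N != 0 -> mon_supp N \subset Z) (in_subring Z f).
Proof.
apply: (iffP allP) => Z_f N; first by rewrite -mcoeff_msupp; apply: Z_f.
by rewrite mcoeff_msupp; apply: Z_f.
Qed.

Lemma mcoeffXM_cell (c : 'X_{1..n} * {set 'I_n}) (f : {mpoly K[n]}) M :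
    mon_supp c.1 \subset c.2 -> in_subring c.2 f -> ('X_[c.1] * f)@_M != 0 ->
  in_cell c M.
Proof.
move=> c_sub /in_subringP f_sub; rewrite mcoeffXM.
case: ifPn => [c_M|_]; last by rewrite eqxx.
by move=> /f_sub; rewrite -(in_cell_addl _ c_sub) submK.
Qed.

Definition cell_quotient (c : 'X_{1..n} * {set 'I_n}) (p : {mpoly K[n]}) :=
  \sum_(m <- msupp p | in_cell c m) p@_m *: 'X_[m - c.1].

Lemma mcoeffXM_cell_quotient (c : 'X_{1..n} * {set 'I_n}) p M :
  ('X_[c.1] * cell_quotient c p)@_M = if in_cell c M then p@_M else 0.
Proof.
rewrite -mcoeff_sum_msupp mulr_sumr; congr (_@__); apply: eq_bigr => m /andP [c_m _].
by rewrite -scalerAr -mpolyXD addmC submK.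
Qed.

End Coefficients.

Section EdgeIdeal.
Local Open Scope ring_scope.
Variables (K : fieldType) (n : nat) (e : rel 'I_n).
Hypothesis eirr : irreflexive e.

Lemma in_edge_ideal0 : in_edge_ideal e (0 : {mpoly K[n]}).
Proof. by exists [::]; rewrite big_nil. Qed.

Lemma in_edge_idealD (p q : {mpoly K[n]}) :
  in_edge_ideal e p -> in_edge_ideal e q -> in_edge_ideal e (p + q).
Proof.
move=> [s1 [e_s1 ->]] [s2 [e_s2 ->]].
by exists (s1 ++ s2); rewrite all_cat e_s1 e_s2 big_cat.
Qed.

Lemma edge_idealP (p : {mpoly K[n]}) :
  in_edge_ideal e p <-> forall M, independent e (mon_supp M) -> p@_M = 0.
Proof.
split=> [[s [e_s ->]] M /independentP M_ind | p_ind].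
  rewrite raddf_sum big1_seq // => -[[a b] q] /andP [_ t_s] /=.
  rewrite -mpolyXD mulrC mcoeffXM; case: ifPn => // ab_M.
  have a_M : a \in mon_supp M by rewrite -mnm1_le (lepm_trans (lem_addr _ _) ab_M).
  have b_M : b \in mon_supp M by rewrite -mnm1_le (lepm_trans (lem_addl _ _) ab_M).
  by move: (M_ind a b a_M b_M); rewrite (allP e_s _ t_s).
rewrite (mpolyE p) big_seq; apply: (big_ind (in_edge_ideal e)).
- exact: in_edge_ideal0.
- exact: in_edge_idealD.
move=> m; rewrite mcoeff_msupp => p_m.
have [m_ind | /forall_inPn [a a_m /forall_inPn [b b_m /negbNE ab]]] :=
  boolP (independent e (mon_supp m)).
  by rewrite p_ind ?eqxx in p_m.
have a_b : a != b by apply: contraTneq ab => ->; rewrite eirr.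
exists [:: (a, b, p@_m *: 'X_[m - (U_(a) + U_(b))])]; split; first by rewrite /= ab.
by rewrite big_seq1 /= -scalerAl -!mpolyXD submK ?mnm1D_le.
Qed.

Section CellDecomposition.
Variables (r : nat) (D : 'I_r -> 'X_{1..n} * {set 'I_n}).
Hypotheses (D_sqfree : forall i, squarefree_mon (D i).1)
  (D_supp : forall i, mon_supp (D i).1 \subset (D i).2)
  (D_indep : forall i, independent e (D i).2)
  (D_cover : forall M, independent e (mon_supp M) -> exists i, in_cell (D i) M)
  (D_disjoint : forall i j M, in_cell (D i) M -> in_cell (D j) M -> i = j).

Lemma in_cell_independent i M : in_cell (D i) M -> independent e (mon_supp M).
Proof. by case/andP=> _ /subset_independent; apply. Qed.

Lemma mcoeff_sum_cells (fs : 'I_r -> {mpoly K[n]}) i M :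
    (forall j, in_subring (D j).2 (fs j)) -> ('X_[(D i).1] * fs i)@_M != 0 ->
  (\sum_j 'X_[(D j).1] * fs j)@_M = ('X_[(D i).1] * fs i)@_M.
Proof.
move=> fs_sub M_i; rewrite raddf_sum (bigD1 i) //= big1 ?addr0 // => j j_i.
apply/eqP; apply: contraNT j_i => /(mcoeffXM_cell (D_supp j) (fs_sub j)) M_j.
by rewrite (D_disjoint M_j (mcoeffXM_cell (D_supp i) (fs_sub i) M_i)).
Qed.

Lemma cells_stanley_decomp : sqfree_stanley_decomp K e D.
Proof.
split=> [i | i f f_sub f_I | p | fs fs_sub sum_I i]; first by [].
- apply/mpolyP => N; rewrite mcoeff0; apply/eqP; apply: contraT => f_N.
  have M_nz : ('X_[(D i).1] * f)@_(N + (D i).1) != 0 by rewrite mcoeffXM_add.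
  have /in_cell_independent M_ind := mcoeffXM_cell (D_supp i) f_sub M_nz.
  by rewrite ((edge_idealP _).1 f_I _ M_ind) eqxx in M_nz.
- exists (fun i => cell_quotient (D i) p); split.
    move=> i; apply/in_subringP => N; rewrite -(mcoeffXM_add (D i).1).
    by rewrite mcoeffXM_cell_quotient in_cell_addl //; case: ifP; rewrite ?eqxx.
  apply/edge_idealP => M M_ind; have [i0 M_i0] := D_cover M_ind.
  rewrite mcoeffB raddf_sum (bigD1 i0) //= mcoeffXM_cell_quotient M_i0 big1 ?addr0 ?subrr //.
  move=> j j_i0; rewrite mcoeffXM_cell_quotient; case: ifP => // M_j.
  by rewrite (D_disjoint M_j M_i0) eqxx in j_i0.
- apply/edge_idealP => M M_ind; apply/eqP; apply: contraT => M_nz.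
  have := mcoeff_sum_cells fs_sub M_nz; rewrite ((edge_idealP _).1 sum_I _ M_ind) => M_0.
  by rewrite -M_0 eqxx in M_nz.
Qed.

End CellDecomposition.

End EdgeIdeal.

Section EliminationCells.
Variables (n : nat) (e : rel 'I_n) (s : seq 'I_n).
Hypotheses (esym : ssrbool.symmetric e) (eirr : irreflexive e).
Hypotheses (s_all : forall v, v \in s) (s_elim : elimination_ordering (compl_graph e) s).

Definition elim_cell (o : option 'I_n) : 'X_{1..n} * {set 'I_n} :=
  if o is Some v then (U_(v)%MM, v |: [set w | compl_graph e v w & index w s < index v s])
  else (0%MM, set0).

Lemma elim_cell_sqfree o : squarefree_mon (elim_cell o).1.
Proof. by apply/forallP => i; case: o => [v|] /=; rewrite ?mnm1E ?mnm0E ?leq_b1. Qed.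

Lemma elim_cell_supp o : mon_supp (elim_cell o).1 \subset (elim_cell o).2.
Proof.
apply/subsetP => i; rewrite mem_mon_supp; case: o => [v|] /=; last by rewrite mnm0E.
by rewrite mnm1E !inE; case: (eqVneq v i) => [->|]; rewrite ?eqxx.
Qed.

Lemma elim_cell_independent o : independent e (elim_cell o).2.
Proof.
apply/independentP; case: o => [v|] a b /=; last by rewrite inE.
rewrite !inE => /predU1P [-> | /andP [v_a a_v]] /predU1P [-> | /andP [v_b b_v]].
- by rewrite eirr.
- by case/andP: v_b.
- by rewrite esym; case/andP: v_a.
have [-> | a_b] := eqVneq a b; first by rewrite eirr.
by case/andP: (s_elim (s_all v) v_a v_b a_v b_v a_b).
Qed.

Lemma elim_cell_mdeg o : mdeg (elim_cell o).1 <= 1.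
Proof. by case: o => [v|]; rewrite /= ?mdeg1 ?mdeg0. Qed.

Lemma elim_cell_cover M : independent e (mon_supp M) -> exists o, in_cell (elim_cell o) M.
Proof.
move=> /independentP M_ind; have [M0 | [v0 v0_M]] := set_0Vmem (mon_supp M).
  by exists None; rewrite /in_cell M0 sub0set andbT; apply/mnm_lepP => i; rewrite mnm0E.
have [v v_M v_max] := @arg_maxnP _ v0 (mem (mon_supp M)) (index ^~ s) v0_M.
exists (Some v); rewrite /in_cell /= mnm1_le; apply/andP; split=> //; apply/subsetP => w w_M.
rewrite !inE; have [// | w_v] /= := eqVneq w v.
have le_wv : index w s <= index v s := v_max w w_M.
rewrite /compl_graph eq_sym w_v M_ind //= ltn_neqAle le_wv andbT.
by apply: contra w_v => /eqP /(index_inj w (s_all w) (s_all v)) ->.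
Qed.

Lemma elim_cell_index v w M : v != w ->
  in_cell (elim_cell (Some v)) M -> in_cell (elim_cell (Some w)) M -> index v s < index w s.
Proof.
move=> v_w /andP [/= v_M _] /andP [_ /subsetP /(_ v)].
by rewrite -mnm1_le v_M !inE (negbTE v_w) => /(_ isT) /andP [].
Qed.

Lemma elim_cell_disjoint o o' M :
  in_cell (elim_cell o) M -> in_cell (elim_cell o') M -> o = o'.
Proof.
have none_out v : in_cell (elim_cell (Some v)) M -> ~~ in_cell (elim_cell None) M.
  by case/andP => /= v_M _; apply/nandP; right; apply/subsetPn; exists v; rewrite -?mnm1_le ?inE.
case: o o' => [v|] [w|] // M_o M_o'; last 2 first.
- by have := none_out v M_o; rewrite M_o'.
- by have := none_out w M_o'; rewrite M_o.
have [-> // | v_w] := eqVneq v w.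
have w_v : w != v by rewrite eq_sym.
by have := ltn_trans (elim_cell_index v_w M_o M_o') (elim_cell_index w_v M_o' M_o); rewrite ltnn.
Qed.

End EliminationCells.

Theorem theorem5p5 (K : fieldType) (n : nat) (e : rel 'I_n) :
  simple_graph e -> cochordal e -> (exists x y, e x y) ->
  sreg_le K e 1.
Proof.
(* G need not have an edge. *)
move=> [esym eirr] e_cochordal _.
have [s s_all s_elim] := chordal_elimination_ordering (compl_graph_sym esym)
  (@compl_graph_irr _ e) e_cochordal [set: 'I_n].
have {}s_all v : v \in s by rewrite s_all inE.
exists #|{: option 'I_n}|, (fun i => elim_cell e s (enum_val i)); split.
  apply: (cells_stanley_decomp K eirr) => [i | i | i | M M_ind | i j M M_i M_j].
  - exact: elim_cell_sqfree.
  - exact: elim_cell_supp.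
  - exact: (elim_cell_independent esym eirr s_all s_elim).
  - have [o M_o] := elim_cell_cover s_all M_ind.
    by exists (enum_rank o); rewrite enum_rankK.
  - exact: enum_val_inj (elim_cell_disjoint M_i M_j).
by apply/bigmax_leqP => i _; apply: elim_cell_mdeg.
Qed.
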